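(* Let $M$ be a finite abelian group of order $m$ and $J$ a Jacobi function on $M$. Suppose $i\colon\hat{M}\to\hat{M}$ is a bijection with $i(x)=x\,i(x^{-1})$ for all $x\in\hat{M}$, such that $J(\alpha,\beta)=\frac{1}{m}\sum_{x\in\hat{M}}\alpha(i(x))\beta(i(x)x^{-1})$ for all $\alpha,\beta\in M$. Then $M$ is the trivial group.
   Context: $\hat{M}$ is the Pontryagin dual of $M$, written multiplicatively; for $\alpha\in M$, $x\in\hat{M}$, $\alpha(x)$ is the value of the character $x$ at $\alpha$. $\delta(\alpha)=1$ if $\alpha$ is the identity of $M$ and $0$ otherwise. A Jacobi function on $M$ is a function $J\colon M\times M\to\mathbf{C}$ satisfying: (A) $J(\alpha,\beta)=J(\beta,\alpha)$; (B) with $J^*(\alpha,\beta)=-\delta(\alpha)-\delta(\beta)+J(\alpha,\beta)$, $J^*(\alpha,\beta)J^*(\alpha\beta,\gamma)=J^*(\alpha,\beta\gamma)J^*(\beta,\gamma)$; (C) $\sum_{\beta\in M}J(\alpha_1\beta,\alpha_2\beta^{-1})J(\alpha_3\beta,\alpha_4\beta^{-1})=J(\alpha_1\alpha_4,\alpha_2\alpha_3)$; all for all elements of $M$. *)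

From mathcomp Require Import all_boot all_order all_algebra all_fingroup all_solvable all_field all_character.
Set Implicit Arguments. Unset Strict Implicit. Unset Printing Implicit Defensive.
Import GRing.Theory Num.Theory.
Local Open Scope ring_scope.

Definition delta (gT : finGroupType) (a : gT) : algC := (a == 1%g)%:R.

Definition Jstar (gT : finGroupType) (J : gT -> gT -> algC) (a b : gT) : algC :=
  - delta a - delta b + J a b.

(* Jacobi function on M, conditions (A), (B), (C). *)
Definition jacobi_function (gT : finGroupType) (J : gT -> gT -> algC) : Prop :=
  [/\ (forall a b : gT, J a b = J b a),
      (forall a b c : gT,
          Jstar J a b * Jstar J (a * b)%g c = Jstar J a (b * c)%g * Jstar J b c)
    & (forall a1 a2 a3 a4 : gT,
          \sum_(b : gT) J (a1 * b)%g (a2 * b^-1)%g * J (a3 * b)%g (a4 * b^-1)%g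
          = J (a1 * a4)%g (a2 * a3)%g)].

From mathcomp Require Import all_boot all_order all_algebra all_fingroup all_solvable all_field all_character.
From mathcomp Require Import ring.
Import GRing.Theory Num.Theory.
Local Open Scope ring_scope.

(* All characters of M are linear, indexed by Iirr with 0 the
   trivial one, and the hypothesis on i turns the formula for J into
   J(a,b) = m^-1 sum_x chi_(i x)(a) chi_(i conj(x))(b), so every sum of J^*
   against a character is explicit.  Only condition (B) is used: summing it
   over its last variable, once directly and once after the substitution
   c |-> c g^-1 weighted by a character chi_b, yields the balance identity
     sum_c conj(chi_b(c)) J^*(a,c)
       (chi_(i x1)(ac) - m delta(ac) - chi_(i b)(c) + chi_b(c)) = 0,
   where x1 is the index with i(conj x1) = 0.  For b = x1, a fixed point of i
   (in fact the only one), it forces chi_x1 = 1, so i 0 = 0.  For b = conj z it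
   then says that chi_z and chi_(i z) have the same pairing with J^*(a,_);
   Fourier inversion in a turns this into: conj(i(conj y)) is a fixed point
   of i for every y, hence y = 0, so M has a single character. *)

Lemma sumr_mul_eq_nat {T : finType} {R : pzSemiRingType} (F : T -> R) (y : T) :
  \sum_x F x * (x == y)%:R = F y.
Proof.
rewrite (bigD1 y) //= eqxx mulr1 big1 ?addr0 // => x /negbTE ->.
by rewrite mulr0.
Qed.

Lemma sum_mul_delta_mulg {gT : finGroupType} (f : gT -> algC) (a : gT) :
  \sum_c f c * delta (a * c)%g = f a^-1%g.
Proof.
rewrite -(sumr_mul_eq_nat f); apply: eq_bigr => c _.
by rewrite /delta [c == _]eq_sym eq_invg_mul.
Qed.

Section AbelianCharacters.
Context {gT : finGroupType}.
Hypothesis abelT : abelian [set: gT].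
Local Notation m := (#|[set: gT]|%:R : algC).

Lemma card_setT_neq0 : m != 0.
Proof. by rewrite pnatr_eq0 -lt0n cardG_gt0. Qed.

Lemma sum_irr_mul_conj (u v : Iirr [set: gT]) :
  \sum_a 'chi_u a * ('chi_v a)^* = m * (u == v)%:R.
Proof.
rewrite -(cfdot_irr u v) cfdotE mulrA mulfV ?card_setT_neq0 // mul1r.
by apply: eq_bigl => a; rewrite inE.
Qed.

Lemma sum_irr (u : Iirr [set: gT]) : \sum_a 'chi_u a = m * (u == 0)%:R.
Proof.
rewrite -sum_irr_mul_conj; apply: eq_bigr => a _.
by rewrite irr0 cfun1E inE conjC1 mulr1.
Qed.

Lemma conjC_Iirr_conj (w : Iirr [set: gT]) (c : gT) :
  ('chi_(conjC_Iirr w) c)^* = 'chi_w c.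
Proof. by rewrite conjC_IirrE cfunE conjCK. Qed.

Lemma sum_irr_mul (v w : Iirr [set: gT]) :
  \sum_c 'chi_v c * 'chi_w c = m * (v == conjC_Iirr w)%:R.
Proof.
by rewrite -sum_irr_mul_conj; apply: eq_bigr => c _; rewrite conjC_Iirr_conj.
Qed.

Lemma sum_conj_irr_inj (k : Iirr [set: gT] -> Iirr [set: gT]) (g : Iirr [set: gT] -> algC) :
  injective k -> forall y,
  \sum_a ('chi_(k y) a)^* * \sum_x 'chi_(k x) a * g x = m * g y.
Proof.
move=> k_inj y; under eq_bigr do rewrite mulr_sumr.
rewrite exchange_big /= -(sumr_mul_eq_nat (fun x => m * g x) y).
apply: eq_bigr => x _; rewrite (eq_bigr (fun a => g x * ('chi_(k x) a * ('chi_(k y) a)^*))).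
  by rewrite -mulr_sumr sum_irr_mul_conj (inj_eq k_inj) mulrCA mulrA.
by move=> a _; ring.
Qed.

Lemma abelian_irr_lin (x : Iirr [set: gT]) : 'chi_x \is a linear_char.
Proof. exact: char_abelianP. Qed.

Lemma abelian_irrM (x : Iirr [set: gT]) (a b : gT) :
  'chi_x (a * b)%g = 'chi_x a * 'chi_x b.
Proof. by rewrite (lin_charM (abelian_irr_lin x)) ?inE. Qed.

Lemma abelian_irrV (x : Iirr [set: gT]) (a : gT) : 'chi_x a^-1%g = ('chi_x a)^*.
Proof. by rewrite (lin_charV_conj (abelian_irr_lin x)) ?inE. Qed.

Lemma abelian_irr1 (x : Iirr [set: gT]) : 'chi_x 1%g = 1.
Proof. exact: lin_char1 (abelian_irr_lin x). Qed.

Lemma abelian_irr_mul_conj (x : Iirr [set: gT]) (a : gT) :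
  'chi_x a * ('chi_x a)^* = 1.
Proof.
have := congr1 (fun f : 'CF([set: gT]) => f a) (mul_conjC_lin_char (abelian_irr_lin x)).
by rewrite /= !cfunE cfun1E inE.
Qed.

Lemma abelian_sum_irr_col (a : gT) :
  \sum_(x : Iirr [set: gT]) 'chi_x a = m * delta a.
Proof.
have := congr1 (fun f : 'CF([set: gT]) => f a) (cfReg_sum [set: gT]).
rewrite /= cfRegE sum_cfunE mulr_natr => ->.
by apply: eq_bigr => x _; rewrite cfunE abelian_irr1 mul1r.
Qed.

Lemma abelian_trivg_Iirr : (forall y : Iirr [set: gT], y = 0) -> [set: gT] = 1%g.
Proof.
move=> Iirr_eq0; apply/eqP; rewrite trivg_card1 -(card_Iirr_abelian abelT).
by apply/fintype1P; exists 0.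
Qed.

End AbelianCharacters.

Section TwistedCharacters.
Context {gT : finGroupType} {J : gT -> gT -> algC} {i : Iirr [set: gT] -> Iirr [set: gT]}.
Hypothesis abelT : abelian [set: gT].
Hypothesis i_mul : forall x, 'chi_(i x) = 'chi_x * 'chi_(i (conjC_Iirr x)).
Local Notation m := (#|[set: gT]|%:R : algC).

Lemma irr_i_mul_conj (x : Iirr [set: gT]) (a : gT) :
  'chi_(i x) a * ('chi_(i (conjC_Iirr x)) a)^* = 'chi_x a.
Proof. by rewrite i_mul cfunE -mulrA abelian_irr_mul_conj // mulr1. Qed.

Lemma Jacobi_formulaE :
  (forall a b, J a b = m^-1 *
     \sum_x 'chi_(i x) a * ('chi_(i x) * 'chi_(conjC_Iirr x)) b) ->
  forall a b, J a b = m^-1 * \sum_x 'chi_(i x) a * 'chi_(i (conjC_Iirr x)) b.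
Proof.
move=> J_def a b; rewrite J_def; congr (_ * _); apply: eq_bigr => x _; congr (_ * _).
by rewrite cfunE conjC_IirrE cfunE i_mul cfunE mulrAC abelian_irr_mul_conj // mul1r.
Qed.

Section JacobiFromCharacters.
Hypothesis i_inj : injective i.
Hypothesis J_def : forall a b,
  J a b = m^-1 * \sum_x 'chi_(i x) a * 'chi_(i (conjC_Iirr x)) b.
Hypothesis Jstar_cocycle : forall a b c : gT,
  Jstar J a b * Jstar J (a * b)%g c = Jstar J a (b * c)%g * Jstar J b c.
Context {x1 : Iirr [set: gT]}.
Hypothesis i_conj_x1 : i (conjC_Iirr x1) = 0.

Lemma i_x1 : i x1 = x1.
Proof. by apply: irr_inj; rewrite i_mul i_conj_x1 irr0 mulr1. Qed.

Lemma fixed_i_eq_x1 (z : Iirr [set: gT]) : i z = z -> z = x1.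
Proof.
move=> iz; apply: (can_inj conjC_IirrK); apply: i_inj; rewrite i_conj_x1.
have conj_z_z : 'chi_(conjC_Iirr z) * 'chi_z = 1.
  by rewrite mulrC conjC_IirrE mul_conjC_lin_char ?abelian_irr_lin.
apply/eqP; rewrite -irr_eq1; apply/eqP.
by rewrite -[LHS]mul1r -conj_z_z -mulrA -i_mul iz.
Qed.

Lemma Jstar_inv (a : gT) : Jstar J a a^-1%g = - delta a.
Proof.
have J_inv : J a a^-1%g = delta a.
  rewrite J_def (eq_bigr (fun x => 'chi_x a)) => [|x _].
    by rewrite abelian_sum_irr_col // mulKf ?card_setT_neq0.
  by rewrite abelian_irrV // irr_i_mul_conj.
by rewrite /Jstar J_inv /delta invg_eq1 subrK.
Qed.

Lemma sum_irr_J (a : gT) (v : Iirr [set: gT]) :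
  \sum_c 'chi_v c * J a c =
  \sum_x 'chi_(i x) a * (v == conjC_Iirr (i (conjC_Iirr x)))%:R.
Proof.
under eq_bigr do rewrite J_def mulrCA mulr_sumr.
rewrite -mulr_sumr exchange_big /=.
under eq_bigr do rewrite (eq_bigr _ (fun c _ => mulrCA _ _ _)) -mulr_sumr sum_irr_mul mulrCA.
by rewrite -mulr_sumr mulKf ?card_setT_neq0.
Qed.

Lemma sum_irr_Jstar (a : gT) (v : Iirr [set: gT]) :
  \sum_c 'chi_v c * Jstar J a c =
  \sum_x 'chi_(i x) a * (v == conjC_Iirr (i (conjC_Iirr x)))%:R
    - m * delta a * (v == 0)%:R - 1.
Proof.
rewrite /Jstar; under eq_bigr do rewrite !mulrDr !mulrN.
rewrite !big_split /= !sumrN sum_irr_J -mulr_suml sum_irr sumr_mul_eq_nat abelian_irr1 //.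
by rewrite addrC addrA mulrAC.
Qed.

Lemma sum_Jstar (a : gT) : \sum_c Jstar J a c = 'chi_(i x1) a - m * delta a - 1.
Proof.
rewrite (eq_bigr (fun c => 'chi[[set: gT]]_0 c * Jstar J a c)) => [|c _]; last first.
  by rewrite irr0 cfun1E inE mul1r.
rewrite sum_irr_Jstar eqxx mulr1 -(sumr_mul_eq_nat (fun x => 'chi_(i x) a) x1).
congr (_ - _ - _); apply: eq_bigr => x _; congr (_ * _%:R).
by rewrite eq_sym conjC_Iirr_eq0 -i_conj_x1 (inj_eq i_inj) (can_eq conjC_IirrK).
Qed.

Lemma sum_irr_Jstar_twisted (b : Iirr [set: gT]) (c : gT) :
  \sum_g 'chi_b g * Jstar J (c * g^-1)%g g = 'chi_(i b) c - 'chi_b c - 1.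
Proof.
have sumJ : \sum_g 'chi_b g * J (c * g^-1)%g g = 'chi_(i b) c.
  rewrite (eq_bigr (fun g => m^-1 * \sum_x 'chi_(i x) c * ('chi_b g * ('chi_x g)^*))).
    rewrite -mulr_sumr exchange_big /=.
    under eq_bigr do rewrite -mulr_sumr sum_irr_mul_conj mulrCA eq_sym.
    by rewrite -mulr_sumr sumr_mul_eq_nat mulKf ?card_setT_neq0.
  move=> g _; rewrite J_def mulrCA mulr_sumr; congr (_ * _); apply: eq_bigr => x _.
  rewrite abelian_irrM // abelian_irrV // -(irr_i_mul_conj x g) rmorphM /= conjCK.
  ring.
rewrite /Jstar; under eq_bigr do rewrite !mulrDr !mulrN.
rewrite !big_split /= !sumrN sumJ sumr_mul_eq_nat abelian_irr1 //.
rewrite (eq_bigr (fun g => 'chi_b g * (g == c)%:R)) ?sumr_mul_eq_nat; first ring.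
by move=> g _; rewrite /delta divg_eq1 eq_sym.
Qed.

Lemma sum_Jstar_cocycle (a : gT) (b : Iirr [set: gT]) :
  \sum_c ('chi_b c)^* * Jstar J a c * \sum_g Jstar J (a * c)%g g =
  \sum_c ('chi_b c)^* * Jstar J a c * \sum_g 'chi_b g * Jstar J (c * g^-1)%g g.
Proof.
transitivity (\sum_c \sum_g ('chi_b c)^* * (Jstar J a (c * g)%g * Jstar J c g)).
  apply: eq_bigr => c _; rewrite mulr_sumr; apply: eq_bigr => g _.
  by rewrite -Jstar_cocycle mulrA.
rewrite exchange_big /=.
transitivity (\sum_g \sum_c
    ('chi_b c)^* * Jstar J a c * ('chi_b g * Jstar J (c * g^-1)%g g)).
  apply: eq_bigr => g _; rewrite (reindex_inj (mulIg g^-1%g)) /=.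
  apply: eq_bigr => c _; rewrite mulgKV abelian_irrM // abelian_irrV // rmorphM /= conjCK.
  ring.
by rewrite exchange_big /=; apply: eq_bigr => c _; rewrite mulr_sumr.
Qed.

Lemma Jstar_balance (a : gT) (b : Iirr [set: gT]) :
  \sum_c ('chi_b c)^* * Jstar J a c *
    ('chi_(i x1) (a * c)%g - m * delta (a * c)%g - 'chi_(i b) c + 'chi_b c) = 0.
Proof.
rewrite (eq_bigr (fun c =>
    ('chi_b c)^* * Jstar J a c * \sum_g Jstar J (a * c)%g g
  - ('chi_b c)^* * Jstar J a c * \sum_g 'chi_b g * Jstar J (c * g^-1)%g g)).
  by rewrite sumrB sum_Jstar_cocycle subrr.
by move=> c _; rewrite sum_Jstar sum_irr_Jstar_twisted; ring.
Qed.

Lemma x1_eq0 : x1 = 0.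
Proof.
have chi_x1 a : 'chi_x1 a = 1.
  have := Jstar_balance a x1; rewrite i_x1.
  rewrite (eq_bigr (fun c => 'chi_x1 a * Jstar J a c
      - m * (('chi_x1 c)^* * Jstar J a c * delta (a * c)%g))) => [|c _]; last first.
    rewrite subrK abelian_irrM //; set C := 'chi_x1 c.
    have C_unit : C^* * C = 1 by rewrite mulrC abelian_irr_mul_conj.
    transitivity (C^* * C * ('chi_x1 a * Jstar J a c)
        - m * (C^* * Jstar J a c * delta (a * c)%g)); first ring.
    by rewrite C_unit mul1r.
  rewrite sumrB -!mulr_sumr sum_Jstar i_x1 sum_mul_delta_mulg abelian_irrV // conjCK.
  rewrite Jstar_inv => balance.
  have: 'chi_x1 a * ('chi_x1 a - 1) = 0 by rewrite -[RHS]balance; ring.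
  move/eqP; rewrite mulf_eq0 subr_eq0 => /orP[|/eqP //].
  by rewrite (negbTE (lin_char_neq0 (abelian_irr_lin abelT x1) _)) ?inE.
by apply: irr_inj; rewrite irr0; apply/cfunP => a; rewrite chi_x1 cfun1E inE.
Qed.

Lemma i_0 : i 0 = 0.
Proof. by have := i_conj_x1; rewrite x1_eq0 conjC_Iirr0. Qed.

Lemma sum_irr_i_Jstar (a : gT) (z : Iirr [set: gT]) :
  \sum_c 'chi_(i z) c * Jstar J a c = \sum_c 'chi_z c * Jstar J a c.
Proof.
have := Jstar_balance a (conjC_Iirr z); rewrite x1_eq0 i_0 irr0.
rewrite (eq_bigr (fun c => 'chi_z c * Jstar J a c
    - m * ('chi_z c * Jstar J a c * delta (a * c)%g)
    - 'chi_(i z) c * Jstar J a c + Jstar J a c)) => [|c _]; last first.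
  rewrite cfun1E inE mulr1n conjC_Iirr_conj [in RHS]i_mul cfunE conjC_IirrE cfunE.
  set C := 'chi_z c; have C_unit : C * C^* = 1 by rewrite abelian_irr_mul_conj.
  transitivity (C * Jstar J a c - m * (C * Jstar J a c * delta (a * c)%g)
      - C * 'chi_(i (conjC_Iirr z)) c * Jstar J a c + C * C^* * Jstar J a c).
    ring.
  by rewrite C_unit mul1r.
rewrite big_split !sumrB /= -mulr_sumr sum_mul_delta_mulg Jstar_inv sum_Jstar.
rewrite x1_eq0 i_0 irr0 cfun1E inE mulr1n.
have -> : 'chi_z a^-1%g * - delta a = - delta a.
  by rewrite /delta; case: eqP => [->|_]; rewrite ?oppr0 ?mulr0 // invg1 abelian_irr1 // mul1r.
move=> balance; apply/eqP; rewrite eq_sym -subr_eq0; apply/eqP.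
by rewrite -[RHS]balance; ring.
Qed.

Lemma sum_irr_i_diff_eq0 (a : gT) (z : Iirr [set: gT]) :
  \sum_x 'chi_(i x) a * ((i z == conjC_Iirr (i (conjC_Iirr x)))%:R
                         - (z == conjC_Iirr (i (conjC_Iirr x)))%:R) = 0.
Proof.
under eq_bigr do rewrite mulrBr.
rewrite sumrB; apply/eqP; rewrite subr_eq0; apply/eqP.
have := sum_irr_i_Jstar a z; rewrite !sum_irr_Jstar -[in i z == 0]i_0 (inj_eq i_inj).
by move=> /addIr /addIr.
Qed.

Lemma Iirr_eq0 (y : Iirr [set: gT]) : y = 0.
Proof.
set c := conjC_Iirr (i (conjC_Iirr y)).
have twist : m * ((i c == c)%:R - (c == c)%:R) = 0.
  rewrite -(sum_conj_irr_inj i (fun x => (i c == conjC_Iirr (i (conjC_Iirr x)))%:R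
                                     - (c == conjC_Iirr (i (conjC_Iirr x)))%:R) i_inj y).
  by apply: big1 => a _; rewrite sum_irr_i_diff_eq0 mulr0.
have ic : i c = c.
  move/eqP: twist; rewrite mulf_eq0 (negbTE card_setT_neq0) subr_eq0 eqxx /=.
  by case: (i c =P c) => // _; rewrite mulr0n eq_sym oner_eq0.
apply/eqP; rewrite -conjC_Iirr_eq0 -(inj_eq i_inj) i_0 -conjC_Iirr_eq0 -/c.
by rewrite (fixed_i_eq_x1 c ic) x1_eq0.
Qed.

End JacobiFromCharacters.
End TwistedCharacters.

Theorem mainTheorem13 (gT : finGroupType) (J : gT -> gT -> algC)
    (i : Iirr [set: gT] -> Iirr [set: gT]) :
  abelian [set: gT] ->
  jacobi_function J ->
  bijective i ->
  (forall x : Iirr [set: gT],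
      'chi_(i x) = 'chi_x * 'chi_(i (conjC_Iirr x))) ->
  (forall a b : gT,
      J a b = (#|[set: gT]|%:R)^-1 *
              \sum_(x : Iirr [set: gT])
                 'chi_(i x) a * ('chi_(i x) * 'chi_(conjC_Iirr x)) b) ->
  [set: gT] = 1%g.
Proof.
move=> abelT [_ Jstar_cocycle _] [i' iK i'K] i_mul J_def.
have i_conj_x1 : i (conjC_Iirr (conjC_Iirr (i' 0))) = 0 by rewrite conjC_IirrK i'K.
apply: (abelian_trivg_Iirr abelT) => y.
exact: (Iirr_eq0 abelT i_mul (can_inj iK) (Jacobi_formulaE abelT i_mul J_def)
          Jstar_cocycle i_conj_x1).
Qed.
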